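(* In the network described in the context with homogeneous all-to-all coupling $\varepsilon_{ij}=(1-\delta_{ij})\varepsilon$, $\varepsilon>0$, $(N-1)\varepsilon<1$, a neuronal partial reset function $R$ and a strictly convex rise function $U$ ($U''>0$), the asynchronous periodic (splay) state exists and is linearly stable.
   Context: Model: $N$ units with phases $\phi_i$. A rise function is a smooth $U:[0,\infty)\to[0,\infty)$ with $U'>0$, $U(0)=0$, $U(1)=1$. A partial reset function is a monotonically increasing $R:\mathbb{R}\to\mathbb{R}$ with $R(0)=0$; neuronal if $0\le R(\zeta)\le\zeta$ for $\zeta\ge0$. $H_\varepsilon(\phi)=U^{-1}(U(\phi)+\varepsilon)$, $J_\varepsilon(\phi)=U^{-1}(R(U(\phi)+\varepsilon-1))$. Dynamics: $\varepsilon_{ij}$ is the pulse strength from unit $j$ to unit $i$. Between events phases increase at unit rate. When at time $t$ the set $\Theta^{(0)}=\{j:\phi_j(t^-)=1\}$ is nonempty an avalanche occurs: with $u_i^{(0)}=U(\phi_i(t^-))$, $u_i^{(k+1)}=u_i^{(k)}+\sum_{j\in\Theta^{(k)}}\varepsilon_{ij}$, $\Theta^{(k+1)}=\{i:u_i^{(k)}<1\le u_i^{(k+1)}\}$ until empty, $\Theta=\bigcup_k\Theta^{(k)}$; then $\phi_i(t^+)=H_{\sum_{j\in\Theta}\varepsilon_{ij}}(\phi_i(t^-))$ for $i\notin\Theta$ and $\phi_i(t^+)=J_{\sum_{j\in\Theta}\varepsilon_{ij}}(\phi_i(t^-))$ for $i\in\Theta$. The return map sends the state just before a fixed reference unit fires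 to the state just before it fires next. An asynchronous periodic (splay) state is a state invariant under the return map in which every avalanche has size $1$. Linear stability means that, to first order, small phase perturbations tend to zero under iteration of the return map. *)

From Stdlib Require Import Reals Lra ClassicalEpsilon.
Open Scope R_scope.

(* A network state: phase of unit i (only indices i < N are meaningful). *)
Definition state := nat -> R.

Fixpoint sumN (n : nat) (f : nat -> R) : R :=
  match n with O => 0 | S n' => sumN n' f + f n' end.

Definition decP (P : Prop) : bool :=
  if excluded_middle_informative P then true else false.

(* Rise function U (given together with its sequence of derivatives D,
   D 0 = U, D (n+1) = (D n)'): smooth, U' > 0 on [0,oo), U 0 = 0, U 1 = 1. *)
Definition is_rise_function (U : R -> R) (D : nat -> R -> R) : Prop :=
  (forall x, D O x = U x) /\
  (forall n x, derivable_pt_lim (D n) x (D (S n) x)) /\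
  (forall x, 0 <= x -> 0 < D 1%nat x) /\
  U 0 = 0 /\ U 1 = 1.

Definition is_partial_reset (Rf : R -> R) : Prop :=
  (forall a b, a <= b -> Rf a <= Rf b) /\ Rf 0 = 0.

Definition is_neuronal (Rf : R -> R) : Prop :=
  forall z, 0 <= z -> 0 <= Rf z /\ Rf z <= z.

Definition homog (e : R) (i j : nat) : R := if Nat.eqb i j then 0 else e.

(* Avalanche: step k gives (u^(k), Theta^(k)) for the pre-event state x. *)
Fixpoint aval (N : nat) (eps : nat -> nat -> R) (U : R -> R) (x : state) (k : nat)
  : (nat -> R) * (nat -> bool) :=
  match k with
  | O => (fun i => U (x i), fun i => decP (x i = 1))
  | S k' =>
      let (u, th) := aval N eps U x k' in
      let u' := fun i => u i + sumN N (fun j => if th j then eps i j else 0) in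
      (u', fun i => decP (u i < 1 <= u' i))
  end.

Definition theta N eps U x k : nat -> bool := snd (aval N eps U x k).

Definition in_aval N eps U (x : state) (i : nat) : Prop :=
  exists k, theta N eps U x k i = true.

Definition received N eps U (x : state) (i : nat) : R :=
  sumN N (fun j => if decP (in_aval N eps U x j) then eps i j else 0).

(* One event: x = state at t^-, y = state at t^+.
   y_i = H_s(x_i) = U^{-1}(U(x_i)+s) for i not in Theta,
   y_i = J_s(x_i) = U^{-1}(R(U(x_i)+s-1)) for i in Theta,
   with U^{-1} the inverse of U on [0,oo). *)
Definition event N eps U (Rf : R -> R) (x y : state) : Prop :=
  (exists j, (j < N)%nat /\ x j = 1) /\
  forall i, (i < N)%nat ->
    0 <= y i /\
    (in_aval N eps U x i -> U (y i) = Rf (U (x i) + received N eps U x i - 1)) /\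
    (~ in_aval N eps U x i -> U (y i) = U (x i) + received N eps U x i).

Definition flow N (y z : state) : Prop :=
  exists tau, 0 <= tau /\
    (forall i, (i < N)%nat -> z i = y i + tau) /\
    (forall i, (i < N)%nat -> z i <= 1) /\
    (exists j, (j < N)%nat /\ z j = 1).

Definition valid_state N (x : state) : Prop :=
  forall i, (i < N)%nat -> 0 <= x i <= 1.

Definition pre_fire N eps U r (x : state) : Prop :=
  valid_state N x /\ in_aval N eps U x r.

(* p k: pre-event states, q k: post-event states; p m is the state just before
   r fires next. *)
Definition return_orbit N eps U Rf r (x : state) (m : nat) (p q : nat -> state) : Prop :=
  (0 < m)%nat /\ p O = x /\
  (forall k, (k < m)%nat -> event N eps U Rf (p k) (q k) /\ flow N (q k) (p (S k))) /\
  in_aval N eps U (p m) r /\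
  (forall k, (0 < k)%nat -> (k < m)%nat -> ~ in_aval N eps U (p k) r).

Definition return_map N eps U Rf r (x y : state) : Prop :=
  pre_fire N eps U r x /\
  exists m p q, return_orbit N eps U Rf r x m p q /\
    forall i, (i < N)%nat -> y i = p m i.

Definition avalanche_size_one N eps U (x : state) : Prop :=
  exists j, (j < N)%nat /\ forall i, (i < N)%nat -> (in_aval N eps U x i <-> i = j).

Definition splay_state N eps U Rf r (x : state) : Prop :=
  pre_fire N eps U r x /\
  exists m p q, return_orbit N eps U Rf r x m p q /\
    (forall i, (i < N)%nat -> p m i = x i) /\
    (forall k, (k < m)%nat -> avalanche_size_one N eps U (p k)).

Definition matvec N (M : nat -> nat -> R) (v : state) : state :=
  fun i => sumN N (fun j => M i j * v j).

Definition norm1 N (h : state) : R := sumN N (fun j => Rabs (h j)).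

(* Linear stability: the return map is (Frechet) differentiable at xs on the
   section {x_r = 1} with derivative M, and iterates of M send every
   perturbation to 0. *)
Definition linearly_stable N eps U Rf r (xs : state) : Prop :=
  exists M : nat -> nat -> R,
    (forall e, 0 < e -> exists d, 0 < d /\
       forall h : state, h r = 0 -> (forall i, (i < N)%nat -> Rabs (h i) < d) ->
         exists y, return_map N eps U Rf r (fun i => xs i + h i) y /\
           forall i, (i < N)%nat -> Rabs (y i - xs i - matvec N M h i) <= e * norm1 N h) /\
    (forall v : state, v r = 0 -> forall i, (i < N)%nat ->
       Un_cv (fun k => Nat.iter k (matvec N M) v i) 0).

From Stdlib Require Import Reals Lra Lia ClassicalEpsilon FunctionalExtensionality Ranalysis5.
Open Scope R_scope.

(* The proof rests on one analytic fact: for a strictly convex rise function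
   the sub-threshold response H_e(t) = U^-1(U t + e) to a pulse of strength e
   has slope H_e'(t) = U'(t) / U'(H_e t) in (0,1), since U' is increasing.

   Of the reset function only R(0) = 0 matters.
   3. Stability: a splay state is the start of a periodic orbit of lone
      firings. Near it the return map is the composition of these explicit
      steps, hence differentiable (chain rule), and each linearized step
      contracts the spread max - min of a perturbation by the largest slope
      H_e' < 1 met along the orbit; perturbations vanishing on the reference
      unit therefore decay geometrically.
   4. Existence: the splay state is a ladder of phases 1 = phi_0 > phi_1 >
      ... > phi_(N-1) = c with phi_(s-1) = H_e(phi_s) + c; the gap c is found
      by the intermediate value theorem using (N-1) e < 1. *)

Definition Uinv (U : R -> R) (v : R) : R :=
  epsilon (inhabits 0) (fun x => 0 <= x /\ U x = v).

Definition pulse (U : R -> R) (e t : R) : R := Uinv U (U t + e).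

Definition pulse_slope (U : R -> R) (D : nat -> R -> R) (e t : R) : R :=
  D 1%nat t / D 1%nat (pulse U e t).

Section RiseFunction.

Variables (U : R -> R) (D : nat -> R -> R).
Hypothesis rise : is_rise_function U D.

Lemma U_zero : U 0 = 0.
Proof. apply rise. Qed.

Lemma U_one : U 1 = 1.
Proof. apply rise. Qed.

Lemma U_deriv x : derivable_pt_lim U x (D 1%nat x).
Proof.
  destruct rise as [hD0 [hD _]].
  replace U with (D O) by (apply functional_extensionality; auto).
  apply hD.
Qed.

Lemma U_cont x : continuity_pt U x.
Proof. exact (derivable_continuous_pt U x (exist _ _ (U_deriv x))). Qed.

Lemma U_incr a b : 0 <= a -> a < b -> U a < U b.
Proof.
  intros ha hab.
  destruct (MVT_cor2 U (D 1%nat) a b hab (fun c _ => U_deriv c)) as [c [hc hcab]].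
  assert (0 < D 1%nat c) by (apply rise; lra).
  assert (0 < D 1%nat c * (b - a)) by (apply Rmult_lt_0_compat; lra).
  lra.
Qed.

Lemma U_le_inv a b : 0 <= a -> 0 <= b -> U a <= U b -> a <= b.
Proof.
  intros ha hb h. destruct (Rle_lt_dec a b) as [|hba]; auto.
  assert (U b < U a) by (apply U_incr; auto). lra.
Qed.

Lemma U_lt_inv a b : 0 <= a -> 0 <= b -> U a < U b -> a < b.
Proof.
  intros ha hb h. destruct (Rlt_le_dec a b) as [|hba]; auto.
  destruct (Req_dec a b) as [<-|]; [lra|].
  assert (U b < U a) by (apply U_incr; auto; lra). lra.
Qed.

Lemma U_inj a b : 0 <= a -> 0 <= b -> U a = U b -> a = b.
Proof. intros. apply Rle_antisym; apply U_le_inv; auto; lra. Qed.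

Lemma U_nonneg x : 0 <= x -> 0 <= U x.
Proof.
  intros hx. rewrite <- U_zero.
  destruct (Req_dec x 0) as [->|]; [lra|]. left. apply U_incr; lra.
Qed.

Section Convex.

Hypothesis convex : forall x, 0 <= x -> 0 < D 2%nat x.

Lemma U'_incr a b : 0 <= a -> a < b -> D 1%nat a < D 1%nat b.
Proof.
  intros ha hab. destruct rise as [_ [hD _]].
  destruct (MVT_cor2 (D 1%nat) (D 2%nat) a b hab (fun c _ => hD 1%nat c)) as [c [hc hcab]].
  assert (0 < D 2%nat c) by (apply convex; lra).
  assert (0 < D 2%nat c * (b - a)) by (apply Rmult_lt_0_compat; lra).
  lra.
Qed.

(* A convex U lies above its tangent at 0, hence is unbounded. *)
Lemma U_above_tangent x : 0 <= x -> D 1%nat 0 * x <= U x.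
Proof.
  intros hx. destruct (Req_dec x 0) as [->|]; [rewrite U_zero; lra|].
  destruct (MVT_cor2 U (D 1%nat) 0 x ltac:(lra) (fun c _ => U_deriv c)) as [c [hc hcx]].
  assert (D 1%nat 0 < D 1%nat c) by (apply U'_incr; lra).
  rewrite U_zero in hc.
  assert (D 1%nat 0 * x <= D 1%nat c * x) by (apply Rmult_le_compat_r; lra).
  lra.
Qed.

Lemma U_onto v : 0 <= v -> exists x, 0 <= x /\ U x = v.
Proof.
  intros hv. destruct (Req_dec v 0) as [->|hv0]; [exists 0; split; [lra | apply U_zero]|].
  assert (hd0 : 0 < D 1%nat 0) by (apply rise; lra).
  set (y := v / D 1%nat 0 + 1).
  assert (hy : D 1%nat 0 * y = v + D 1%nat 0) by (unfold y; field; lra).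
  assert (hy0 : 1 <= y).
  { unfold y. assert (0 <= v / D 1%nat 0) by (unfold Rdiv; apply Rmult_le_pos; [lra | left; apply Rinv_0_lt_compat; lra]). lra. }
  assert (D 1%nat 0 * y <= U y) by (apply U_above_tangent; lra).
  destruct (IVT_interv (fun s => U s - v) 0 y) as [z [hz hUz]].
  - intros a _. apply continuity_pt_minus; [apply U_cont | apply continuity_pt_const; intros ? ?; auto].
  - lra.
  - rewrite U_zero. lra.
  - lra.
  - exists z; split; lra.
Qed.

Lemma Uinv_spec v : 0 <= v -> 0 <= Uinv U v /\ U (Uinv U v) = v.
Proof. intros hv. unfold Uinv. apply epsilon_spec, U_onto, hv. Qed.

Lemma Uinv_unique x v : 0 <= x -> U x = v -> Uinv U v = x.
Proof.
  intros hx hxv.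
  destruct (Uinv_spec v) as [h1 h2]; [rewrite <- hxv; apply U_nonneg; auto|].
  apply U_inj; congruence.
Qed.

Lemma Uinv_mono a b : 0 <= a -> a <= b -> Uinv U a <= Uinv U b.
Proof.
  intros ha hab.
  destruct (Uinv_spec a ha) as [h1 h2]. destruct (Uinv_spec b ltac:(lra)) as [h3 h4].
  apply U_le_inv; auto; lra.
Qed.

Lemma Uinv_cont v : 0 < v -> continuity_pt (Uinv U) v.
Proof.
  intros hv.
  destruct (Uinv_spec (v + 1) ltac:(lra)) as [h1 h2].
  assert (hub : 0 < Uinv U (v + 1)).
  { destruct h1 as [|h0]; auto. rewrite <- h0, U_zero in h2. lra. }
  apply (continuity_pt_recip_interv U (Uinv U) 0 (Uinv U (v + 1)) hub).
  - intros x y hx hxy _. apply U_incr; auto.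
  - intros x hx _. rewrite U_zero in hx. apply (Uinv_spec x hx).
  - intros x hx hx'. rewrite U_zero in hx. rewrite h2 in hx'.
    split; [apply (Uinv_spec x hx) | apply Uinv_mono; auto].
  - intros a _. apply U_cont.
  - rewrite U_zero, h2. lra.
Qed.

Lemma Uinv_deriv v : 0 < v -> derivable_pt_lim (Uinv U) v (1 / D 1%nat (Uinv U v)).
Proof.
  intros hv.
  set (dU := fun a (_ : Uinv U (v / 2) <= a <= Uinv U (v + 1)) =>
               exist (fun l => derivable_pt_abs U a l) (D 1%nat a) (U_deriv a)).
  assert (hin : Uinv U (v / 2) <= Uinv U v <= Uinv U (v + 1)) by (split; apply Uinv_mono; lra).
  assert (hder : derive_pt U (Uinv U v) (dU (Uinv U v) hin) = D 1%nat (Uinv U v))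
    by (apply derive_pt_eq_0, U_deriv).
  rewrite <- hder.
  apply (derivable_pt_lim_recip_interv U (Uinv U) (v / 2) (v + 1) v dU).
  - apply Uinv_cont; auto.
  - lra.
  - lra.
  - intros x hx. apply (Uinv_spec x). lra.
  - rewrite hder. apply Rgt_not_eq, rise, Uinv_spec. lra.
Qed.

Section Pulse.

Variable e : R.
Hypothesis e_pos : 0 < e.

Lemma pulse_spec t : 0 <= t -> 0 <= pulse U e t /\ U (pulse U e t) = U t + e.
Proof. intros ht. apply Uinv_spec. assert (0 <= U t) by (apply U_nonneg; auto). lra. Qed.

Lemma pulse_gt t : 0 <= t -> t < pulse U e t.
Proof.
  intros ht. destruct (pulse_spec t ht) as [h1 h2]. apply U_lt_inv; auto. lra.
Qed.

Lemma pulse_deriv t : 0 <= t -> derivable_pt_lim (pulse U e) t (pulse_slope U D e t).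
Proof.
  intros ht. assert (0 <= U t) by (apply U_nonneg; auto).
  assert (0 < D 1%nat (pulse U e t)) by (apply rise, pulse_spec; auto).
  replace (pulse U e) with (comp (Uinv U) (fun s => U s + e))
    by (apply functional_extensionality; reflexivity).
  replace (pulse_slope U D e t) with (1 / D 1%nat (Uinv U (U t + e)) * (D 1%nat t + 0))
    by (unfold pulse_slope, pulse in *; field; lra).
  apply derivable_pt_lim_comp.
  - apply derivable_pt_lim_plus; [apply U_deriv | apply derivable_pt_lim_const].
  - apply Uinv_deriv. lra.
Qed.

Lemma pulse_cont t : 0 <= t -> continuity_pt (pulse U e) t.
Proof. intros ht. exact (derivable_continuous_pt _ t (exist _ _ (pulse_deriv t ht))). Qed.

Lemma pulse_slope_bounds t : 0 <= t -> 0 < pulse_slope U D e t < 1.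
Proof.
  intros ht. unfold pulse_slope.
  assert (0 < D 1%nat t) by (apply rise; auto).
  assert (D 1%nat t < D 1%nat (pulse U e t)) by (apply U'_incr, pulse_gt; auto).
  split; [apply Rdiv_lt_0_compat; lra|].
  replace 1 with (D 1%nat (pulse U e t) / D 1%nat (pulse U e t)) by (field; lra).
  apply Rmult_lt_compat_r; [apply Rinv_0_lt_compat|]; lra.
Qed.

Lemma pulse_first_order t : 0 <= t -> forall eps, 0 < eps -> exists d, 0 < d /\
  forall s, Rabs s < d ->
    Rabs (pulse U e (t + s) - pulse U e t - pulse_slope U D e t * s) <= eps * Rabs s.
Proof.
  intros ht eps heps.
  destruct (pulse_deriv t ht eps heps) as [[d hd] Hd].
  exists d; split; auto. intros s hs.
  destruct (Req_dec s 0) as [->|hs0].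
  { rewrite Rplus_0_r, !Rabs_R0. replace (_ - _ - _) with 0 by ring. rewrite Rabs_R0. lra. }
  replace (pulse U e (t + s) - pulse U e t - pulse_slope U D e t * s)
    with (((pulse U e (t + s) - pulse U e t) / s - pulse_slope U D e t) * s) by (field; auto).
  rewrite Rabs_mult. apply Rmult_le_compat_r; [apply Rabs_pos | left; apply Hd; auto].
Qed.

End Pulse.
End Convex.
End RiseFunction.

Lemma decP_true (P : Prop) : P -> decP P = true.
Proof. intro h. unfold decP. destruct (excluded_middle_informative P); tauto. Qed.

Lemma decP_false (P : Prop) : ~ P -> decP P = false.
Proof. intro h. unfold decP. destruct (excluded_middle_informative P); tauto. Qed.

Lemma decP_holds (P : Prop) : decP P = true -> P.
Proof. unfold decP. destruct (excluded_middle_informative P); auto. discriminate. Qed.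

Lemma sumN_ext n f g : (forall j, (j < n)%nat -> f j = g j) -> sumN n f = sumN n g.
Proof.
  induction n as [|n IH]; simpl; intros h; auto.
  rewrite IH, (h n); auto.
Qed.

Lemma sumN_zero n f : (forall j, (j < n)%nat -> f j = 0) -> sumN n f = 0.
Proof.
  induction n as [|n IH]; simpl; intros h; auto.
  rewrite IH, (h n); auto. ring.
Qed.

Lemma sumN_single n f k : (k < n)%nat ->
  (forall j, (j < n)%nat -> j <> k -> f j = 0) -> sumN n f = f k.
Proof.
  induction n as [|n IH]; simpl; intros hk h; [lia|].
  destruct (Nat.eq_dec k n) as [->|hkn].
  - rewrite sumN_zero; [ring|]. intros j hj. apply h; lia.
  - rewrite IH, (h n); [ring | lia | lia | lia |]. intros j hj hjk. apply h; lia.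
Qed.

Lemma norm1_nonneg N h : 0 <= norm1 N h.
Proof.
  unfold norm1. induction N as [|N IH]; simpl; [lra|].
  assert (0 <= Rabs (h N)) by apply Rabs_pos. lra.
Qed.

Lemma norm1_ge N h i : (i < N)%nat -> Rabs (h i) <= norm1 N h.
Proof.
  unfold norm1. induction N as [|N IH]; simpl; intros hi; [lia|].
  assert (0 <= Rabs (h N)) by apply Rabs_pos.
  assert (0 <= norm1 N h) by apply norm1_nonneg. unfold norm1 in *.
  destruct (Nat.eq_dec i N) as [->|]; [lra|].
  assert (Rabs (h i) <= sumN N (fun j => Rabs (h j))) by (apply IH; lia). lra.
Qed.

Lemma norm1_lt N h d : (forall i, (i < N)%nat -> Rabs (h i) < d) -> norm1 N h <= INR N * d.
Proof.
  unfold norm1. induction N as [|N IH]; intros H; cbn [sumN]; [simpl; lra|].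
  rewrite S_INR. assert (Rabs (h N) < d) by (apply H; lia).
  assert (sumN N (fun j => Rabs (h j)) <= INR N * d) by (apply IH; intros; apply H; lia). lra.
Qed.

Lemma norm1_scaled N h K d : 1 <= K -> 0 < d ->
  (forall i, (i < N)%nat -> Rabs (h i) < d / (K * (INR N + 1))) -> K * norm1 N h < d.
Proof.
  intros hK hd hh.
  assert (hN : 0 <= INR N) by apply pos_INR.
  assert (hn := norm1_lt N h _ hh).
  assert (K * norm1 N h <= K * (INR N * (d / (K * (INR N + 1)))))
    by (apply Rmult_le_compat_l; lra).
  assert (K * (INR N * (d / (K * (INR N + 1)))) = d * INR N / (INR N + 1)) by (field; lra).
  assert (d * INR N / (INR N + 1) < d).
  { apply (Rmult_lt_reg_r (INR N + 1)); [lra|].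
    unfold Rdiv. rewrite Rmult_assoc, Rinv_l by lra. nra. }
  lra.
Qed.

Lemma uniform_radius (n : nat) (P : nat -> R -> Prop) :
  (forall i d d', 0 < d' <= d -> P i d -> P i d') ->
  (forall i, (i < n)%nat -> exists d, 0 < d /\ P i d) ->
  exists d, 0 < d /\ forall i, (i < n)%nat -> P i d.
Proof.
  intros hmono. induction n as [|n IH]; intros h.
  - exists 1. split; [lra | intros; lia].
  - destruct IH as [d1 [hd1 H1]]; [intros; apply h; lia|].
    destruct (h n ltac:(lia)) as [d2 [hd2 H2]].
    assert (0 < Rmin d1 d2) by (apply Rmin_pos; auto).
    exists (Rmin d1 d2). split; auto. intros i hi. destruct (Nat.eq_dec i n) as [->|].
    + apply (hmono n d2); auto. split; [auto | apply Rmin_r].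
    + apply (hmono i d1); [split; [auto | apply Rmin_l] | apply H1; lia].
Qed.

Lemma uniform_bound_below_one (n : nat) (P : nat -> R -> Prop) :
  (forall i c c', c <= c' -> P i c -> P i c') ->
  (forall i, (i < n)%nat -> exists c, c < 1 /\ P i c) ->
  exists c, 0 <= c < 1 /\ forall i, (i < n)%nat -> P i c.
Proof.
  intros hmono. induction n as [|n IH]; intros h.
  - exists 0. split; [lra | intros; lia].
  - destruct IH as [c1 [hc1 H1]]; [intros; apply h; lia|].
    destruct (h n ltac:(lia)) as [c2 [hc2 H2]].
    exists (Rmax c1 c2). split.
    + split; [eapply Rle_trans; [|apply Rmax_l]; lra | apply Rmax_lub_lt; lra].
    + intros i hi. destruct (Nat.eq_dec i n) as [->|].
      * apply (hmono n c2); [apply Rmax_r | auto].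
      * apply (hmono i c1); [apply Rmax_l | apply H1; lia].
Qed.

Lemma homog_self e i : homog e i i = 0.
Proof. unfold homog. rewrite Nat.eqb_refl. reflexivity. Qed.

Lemma homog_other e i j : i <> j -> homog e i j = e.
Proof. intro h. unfold homog. apply Nat.eqb_neq in h. rewrite h. reflexivity. Qed.

Definition lone_firing (N : nat) (U : R -> R) (e : R) (x : state) (f : nat) : Prop :=
  (f < N)%nat /\ x f = 1 /\
  forall i, (i < N)%nat -> i <> f -> 0 <= x i < 1 /\ U (x i) + e < 1.

Lemma theta_succ N eps U x k i : theta N eps U x (S k) i =
  decP (fst (aval N eps U x k) i < 1 <=
        fst (aval N eps U x k) i + sumN N (fun j => if theta N eps U x k j then eps i j else 0)).
Proof. unfold theta. simpl. destruct (aval N eps U x k). reflexivity. Qed.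

Section Avalanche.

Variables (N : nat) (e : R) (U : R -> R) (D : nat -> R -> R).
Hypothesis rise : is_rise_function U D.

Lemma avalanche_empty x : (forall i, (i < N)%nat -> x i <> 1) ->
  forall K i, (i < N)%nat -> theta N (homog e) U x K i = false.
Proof.
  intros h. unfold theta.
  assert (forall K, fst (aval N (homog e) U x K) = (fun i => U (x i)) /\
                    forall i, (i < N)%nat -> snd (aval N (homog e) U x K) i = false) as H.
  { induction K as [|K [Hu Hth]].
    - split; auto. intros i hi. apply decP_false, h, hi.
    - simpl. destruct (aval N (homog e) U x K) as [u th]. simpl in Hu, Hth.
      assert (Hs : forall i, sumN N (fun j => if th j then homog e i j else 0) = 0).
      { intro i. apply sumN_zero. intros j hj. rewrite Hth; auto. }
      cbn [fst snd]. split.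
      + apply functional_extensionality. intro i. rewrite Hs, Hu. ring.
      + intros i hi. apply decP_false. rewrite Hs. lra. }
  intros K. apply H.
Qed.

Lemma avalanche_first_generation x f : (f < N)%nat -> x f = 1 ->
  (forall i, (i < N)%nat -> i <> f -> x i <> 1) ->
  forall i, theta N (homog e) U x 1 i = decP (U (x i) < 1 <= U (x i) + homog e i f).
Proof.
  intros hf hx h i. unfold theta. simpl.
  rewrite (sumN_single N _ f hf).
  - rewrite (decP_true (x f = 1)) by auto. reflexivity.
  - intros j hj hjf. rewrite decP_false by (apply h; auto). reflexivity.
Qed.

Lemma avalanche_stops x f : lone_firing N U e x f ->
  forall K i, (1 <= K)%nat -> (i < N)%nat -> theta N (homog e) U x K i = false.
Proof.
  intros [hf [hx h]].
  assert (hbelow : forall i, (i < N)%nat -> i <> f -> x i <> 1).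
  { intros i hi hif. destruct (h i hi hif). lra. }
  induction K as [|K IH]; intros i hK hi; [lia|].
  destruct K as [|K].
  - rewrite (avalanche_first_generation x f hf hx hbelow i). apply decP_false.
    destruct (Nat.eq_dec i f) as [->|hif].
    + rewrite hx, (U_one U D rise). lra.
    + rewrite homog_other by auto. destruct (h i hi hif). lra.
  - rewrite theta_succ. apply decP_false. rewrite sumN_zero; [lra|].
    intros j hj. rewrite IH; auto. lia.
Qed.

Lemma lone_firing_avalanche x f : lone_firing N U e x f ->
  forall i, (i < N)%nat ->
    (in_aval N (homog e) U x i <-> i = f) /\ received N (homog e) U x i = homog e i f.
Proof.
  intros hlone.
  destruct hlone as [hf [hx h]] eqn:Hl. clear Hl.
  assert (Hin : forall i, (i < N)%nat -> (in_aval N (homog e) U x i <-> i = f)).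
  { intros i hi. split.
    - intros [K HK]. destruct K as [|K].
      + apply decP_holds in HK. destruct (Nat.eq_dec i f); auto.
        destruct (h i hi n). lra.
      + rewrite (avalanche_stops x f hlone (S K) i) in HK by lia. discriminate.
    - intros ->. exists O. apply decP_true. auto. }
  intros i hi. split; [apply Hin; auto|].
  unfold received. rewrite (sumN_single N _ f hf).
  - rewrite decP_true by (apply Hin; auto). reflexivity.
  - intros j hj hjf. rewrite decP_false by (rewrite Hin; auto). reflexivity.
Qed.

Lemma singleton_avalanche_lone x j : valid_state N x -> (j < N)%nat ->
  (forall i, (i < N)%nat -> (in_aval N (homog e) U x i <-> i = j)) ->
  lone_firing N U e x j.
Proof.
  intros hv hj hs.
  assert (first_gen : forall i, (i < N)%nat -> x i = 1 -> i = j).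
  { intros i hi hxi. apply hs; auto. exists O. apply decP_true. auto. }
  assert (hxj : x j = 1).
  { apply NNPP. intro hn.
    assert (hn' : forall i, (i < N)%nat -> x i <> 1).
    { intros i hi hxi. apply hn. rewrite <- (first_gen i hi hxi). exact hxi. }
    destruct (proj2 (hs j hj) eq_refl) as [K HK].
    rewrite (avalanche_empty x hn' K j hj) in HK. discriminate. }
  assert (hbelow : forall i, (i < N)%nat -> i <> j -> x i < 1).
  { intros i hi hij. destruct (hv i hi). destruct (Req_dec (x i) 1); [|lra].
    exfalso. apply hij. apply first_gen; auto. }
  split; [auto | split; [auto|]].
  intros i hi hij. split; [split; [apply hv; auto | apply hbelow; auto]|].
  destruct (Rlt_le_dec (U (x i) + e) 1) as [|hge]; auto. exfalso.
  assert (U (x i) < 1).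
  { rewrite <- (U_one U D rise). apply (U_incr U D rise); [apply hv | apply hbelow]; auto. }
  apply hij. apply hs; auto. exists 1%nat.
  rewrite (avalanche_first_generation x j hj hxj).
  - apply decP_true. rewrite homog_other by auto. lra.
  - intros k hk hkj. specialize (hbelow k hk hkj). lra.
Qed.

End Avalanche.

Definition after_event (U : R -> R) (e : R) (f : nat) (x : state) : state :=
  fun i => if Nat.eqb i f then 0 else pulse U e (x i).

Definition next_state (U : R -> R) (e : R) (f f' : nat) (x : state) : state :=
  fun i => after_event U e f x i + 1 - after_event U e f x f'.

Fixpoint orbit (U : R -> R) (e : R) (fs : nat -> nat) (x : state) (k : nat) : state :=
  match k with
  | O => x
  | S k' => next_state U e (fs k') (fs k) (orbit U e fs x k')
  end.

Definition lone_orbit (N : nat) (U : R -> R) (e : R) (fs : nat -> nat) (x : state) (m : nat) : Prop :=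
  forall k, (k <= m)%nat -> lone_firing N U e (orbit U e fs x k) (fs k).

Lemma lone_firing_ext N U e x y f :
  (forall i, (i < N)%nat -> x i = y i) -> lone_firing N U e x f -> lone_firing N U e y f.
Proof.
  intros h [hf [hx hrest]]. split; [auto|]. split; [rewrite <- h; auto|].
  intros i hi hif. rewrite <- h by auto. auto.
Qed.

Lemma next_state_ext N U e f f' x y : (f < N)%nat -> (f' < N)%nat ->
  (forall i, (i < N)%nat -> x i = y i) ->
  forall i, (i < N)%nat -> next_state U e f f' x i = next_state U e f f' y i.
Proof.
  intros hf hf' h i hi. unfold next_state, after_event.
  destruct (Nat.eqb i f); destruct (Nat.eqb f' f); rewrite ?h by auto; reflexivity.
Qed.

Section Dynamics.

Variables (N : nat) (U : R -> R) (D : nat -> R -> R) (e : R) (Rf : R -> R).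
Hypothesis rise : is_rise_function U D.
Hypothesis convex : forall x, 0 <= x -> 0 < D 2%nat x.
Hypothesis e_pos : 0 < e.
Hypothesis reset : is_partial_reset Rf.

Lemma after_event_range x f : lone_firing N U e x f ->
  forall i, (i < N)%nat -> 0 <= after_event U e f x i < 1.
Proof.
  intros [hf [hx h]] i hi. unfold after_event. destruct (Nat.eqb_spec i f) as [|hif]; [lra|].
  destruct (h i hi hif) as [[h0 _] hsub].
  destruct (pulse_spec U D rise convex e e_pos (x i) h0) as [h1 h2].
  split; auto. apply (U_lt_inv U D rise); [auto | lra |]. rewrite (U_one U D rise). lra.
Qed.

Lemma event_determined x y f : lone_firing N U e x f ->
  event N (homog e) U Rf x y -> forall i, (i < N)%nat -> y i = after_event U e f x i.
Proof.
  intros hlone [_ hev] i hi.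
  destruct (lone_firing_avalanche N e U D rise x f hlone i hi) as [Hin Hrec].
  destruct hlone as [hf [hx h]].
  destruct (hev i hi) as [hy [hfired hquiet]]. unfold after_event.
  destruct (Nat.eqb_spec i f) as [->|hif].
  - specialize (hfired (proj2 Hin eq_refl)).
    rewrite Hrec, homog_self, hx, (U_one U D rise) in hfired.
    replace (1 + 0 - 1) with 0 in hfired by ring. rewrite (proj2 reset) in hfired.
    apply (U_inj U D rise); [auto | lra | rewrite (U_zero U D rise); auto].
  - assert (~ in_aval N (homog e) U x i) as hq by (rewrite Hin; auto).
    specialize (hquiet hq). rewrite Hrec, homog_other in hquiet by auto.
    symmetry. apply (Uinv_unique U D rise convex); auto.
Qed.

Lemma event_after x f : lone_firing N U e x f -> event N (homog e) U Rf x (after_event U e f x).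
Proof.
  intros hlone. split; [exists f; split; apply hlone|].
  intros i hi. destruct (lone_firing_avalanche N e U D rise x f hlone i hi) as [Hin Hrec].
  split; [apply (after_event_range x f hlone i hi)|].
  destruct hlone as [hf [hx h]]. unfold after_event.
  destruct (Nat.eqb_spec i f) as [->|hif]; split.
  - intros _. rewrite Hrec, homog_self, hx, (U_one U D rise), (U_zero U D rise).
    replace (1 + 0 - 1) with 0 by ring. symmetry. apply reset.
  - intro hn. exfalso. apply hn, Hin. reflexivity.
  - intro hin. exfalso. apply hif, Hin, hin.
  - intros _. rewrite Hrec, homog_other by auto.
    apply (pulse_spec U D rise convex e e_pos), h; auto.
Qed.

Lemma next_state_fires f f' x : next_state U e f f' x f' = 1.
Proof. unfold next_state. ring. Qed.

Lemma flow_next x f f' : lone_firing N U e x f -> lone_firing N U e (next_state U e f f' x) f' ->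
  flow N (after_event U e f x) (next_state U e f f' x).
Proof.
  intros hlone [hf' [_ h']].
  exists (1 - after_event U e f x f'). split.
  { destruct (after_event_range x f hlone f' hf'). lra. }
  split; [intros i hi; unfold next_state; ring|].
  split.
  - intros i hi. destruct (Nat.eq_dec i f') as [->|hif]; [rewrite next_state_fires; lra|].
    destruct (h' i hi hif). lra.
  - exists f'. split; auto. apply next_state_fires.
Qed.

Lemma next_state_pos x f f' : lone_firing N U e x f -> (f' < N)%nat ->
  forall i, (i < N)%nat -> 0 < next_state U e f f' x i.
Proof.
  intros hlone hf' i hi. unfold next_state.
  destruct (after_event_range x f hlone i hi). destruct (after_event_range x f hlone f' hf'). lra.
Qed.

Lemma event_flow_next x y z f f' : lone_firing N U e x f -> lone_firing N U e z f' ->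
  event N (homog e) U Rf x y -> flow N y z ->
  forall i, (i < N)%nat -> z i = next_state U e f f' x i.
Proof.
  intros hx [hf' [hz _]] hev [tau [_ [hflow _]]] i hi.
  assert (hy := event_determined x y f hx hev).
  assert (tau = 1 - after_event U e f x f') as ->.
  { rewrite hflow, hy in hz by auto. lra. }
  rewrite hflow, hy by auto. unfold next_state. ring.
Qed.

Lemma lone_orbit_return r x m fs : (0 < m)%nat -> fs O = r -> fs m = r ->
  (forall k, (0 < k)%nat -> (k < m)%nat -> fs k <> r) -> lone_orbit N U e fs x m ->
  pre_fire N (homog e) U r x /\
  return_orbit N (homog e) U Rf r x m (orbit U e fs x)
    (fun k => after_event U e (fs k) (orbit U e fs x k)).
Proof.
  intros hm hf0 hfm hnr hlone.
  assert (aval_is : forall k i, (k <= m)%nat -> (i < N)%nat ->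
            (in_aval N (homog e) U (orbit U e fs x k) i <-> i = fs k)).
  { intros k i hk hi. apply (lone_firing_avalanche N e U D rise _ _ (hlone k hk) i hi). }
  destruct (hlone O ltac:(lia)) as [hr [hx0 hrest]]. rewrite hf0 in hr, hx0, hrest.
  simpl in hx0, hrest.
  split; [split|].
  - intros i hi. destruct (Nat.eq_dec i r) as [->|hir]; [lra|].
    destruct (hrest i hi hir). lra.
  - apply (aval_is O r); [lia | auto | auto].
  - split; [auto|]. split; [reflexivity|]. split; [|split].
    + intros k hk. split.
      * apply event_after, hlone. lia.
      * apply flow_next; apply hlone; lia.
    + apply (aval_is m r); [lia | auto | auto].
    + intros k hk0 hkm hin. apply (hnr k hk0 hkm). symmetry.
      apply (aval_is k r); [lia | auto | auto].
Qed.


Lemma valid_return_orbit r x m p q : valid_state N x ->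
  return_orbit N (homog e) U Rf r x m p q -> forall k, (k <= m)%nat -> valid_state N (p k).
Proof.
  intros hv [_ [hp0 [hev _]]]. induction k as [|k IH]; intros hk; [rewrite hp0; auto|].
  destruct (hev k ltac:(lia)) as [[_ hpost] [tau [htau [hflow [hbelow _]]]]].
  intros i hi. split; [|apply hbelow; auto].
  rewrite hflow by auto. destruct (hpost i hi) as [hy _]. lra.
Qed.

Lemma orbit_of_steps (p : nat -> state) fs m :
  (forall k, (k <= m)%nat -> (fs k < N)%nat) ->
  (forall k, (k < m)%nat -> forall i, (i < N)%nat ->
     p (S k) i = next_state U e (fs k) (fs (S k)) (p k) i) ->
  forall k, (k <= m)%nat -> forall i, (i < N)%nat -> orbit U e fs (p O) k i = p k i.
Proof.
  intros hfs hstep. induction k as [|k IH]; intros hk i hi; [reflexivity|].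
  simpl. rewrite hstep by (auto; lia).
  apply (next_state_ext N); auto; [apply hfs; lia | intros j hj; apply IH; auto; lia].
Qed.

Lemma splay_lone_orbit r x : (r < N)%nat -> splay_state N (homog e) U Rf r x ->
  exists m fs, (0 < m)%nat /\ fs O = r /\ fs m = r /\
    (forall k, (0 < k)%nat -> (k < m)%nat -> fs k <> r) /\
    lone_orbit N U e fs x m /\ (forall i, (i < N)%nat -> orbit U e fs x m i = x i).
Proof.
  intros hr [[hv hin] [m [p [q [horb [hper hsize]]]]]].
  assert (hvalid := valid_return_orbit r x m p q hv horb).
  destruct horb as [hm [hp0 [hev [hinm hnot]]]].
  set (single := fun k j => (j < N)%nat /\
                   forall i, (i < N)%nat -> (in_aval N (homog e) U (p k) i <-> i = j)).
  set (fs := fun k => if (k <? m)%nat then epsilon (inhabits O) (single k) else r).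
  assert (hsingle : forall k, (k < m)%nat -> single k (fs k)).
  { intros k hk. unfold fs. rewrite (proj2 (Nat.ltb_lt k m) hk).
    apply epsilon_spec, hsize, hk. }
  assert (hfm : fs m = r) by (unfold fs; rewrite Nat.ltb_irrefl; reflexivity).
  assert (hlone_lt : forall k, (k < m)%nat -> lone_firing N U e (p k) (fs k)).
  { intros k hk. destruct (hsingle k hk) as [hf hs].
    apply (singleton_avalanche_lone N e U D rise); auto. apply hvalid. lia. }
  assert (hf0 : fs O = r).
  { destruct (hsingle O hm) as [_ hs]. symmetry. apply hs; [auto | rewrite hp0; auto]. }
  assert (hlone : forall k, (k <= m)%nat -> lone_firing N U e (p k) (fs k)).
  { intros k hk. destruct (Nat.eq_dec k m) as [->|]; [|apply hlone_lt; lia].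
    rewrite hfm, <- hf0. apply (lone_firing_ext N U e (p O)); [|apply hlone_lt; auto].
    intros i hi. rewrite hper, hp0; auto. }
  assert (horbit : forall k, (k <= m)%nat -> forall i, (i < N)%nat -> orbit U e fs x k i = p k i).
  { rewrite <- hp0. apply orbit_of_steps; [intros k hk; apply hlone; auto|].
    intros k hk. destruct (hev k hk) as [hevk hflow].
    apply (event_flow_next _ (q k)); auto; apply hlone; lia. }
  exists m, fs. split; [auto|]. split; [auto|]. split; [auto|]. split; [|split].
  - intros k hk0 hkm hfr. apply (hnot k hk0 hkm). apply (hsingle k hkm); auto.
  - intros k hk. apply (lone_firing_ext N U e (p k)); [|apply hlone; auto].
    intros i hi. symmetry. apply horbit; auto.
  - intros i hi. rewrite horbit, hper; auto.
Qed.

(* On a periodic lone-firing orbit all phases are positive: after an event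
   only the firing unit is at 0, and it is immediately lifted by the flow. *)
Lemma lone_orbit_pos fs x m : (0 < m)%nat -> lone_orbit N U e fs x m ->
  (forall i, (i < N)%nat -> orbit U e fs x m i = x i) ->
  forall k, (k <= m)%nat -> forall i, (i < N)%nat -> 0 < orbit U e fs x k i.
Proof.
  intros hm hlone hper.
  assert (hsucc : forall k, (k < m)%nat -> forall i, (i < N)%nat -> 0 < orbit U e fs x (S k) i).
  { intros k hk i hi. apply (next_state_pos _ (fs k)); [apply hlone; lia | apply hlone; lia | auto]. }
  intros [|k] hk i hi.
  - simpl. rewrite <- (hper i hi). destruct m as [|m]; [lia|]. apply hsucc; auto.
  - apply hsucc; auto; lia.
Qed.

End Dynamics.

Definition event_deriv (U : R -> R) (D : nat -> R -> R) (e : R) (f : nat) (A d : state) : state :=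
  fun i => if Nat.eqb i f then 0 else pulse_slope U D e (A i) * d i.

Definition step_deriv (U : R -> R) (D : nat -> R -> R) (e : R) (f f' : nat) (A d : state) : state :=
  fun i => event_deriv U D e f A d i - event_deriv U D e f A d f'.

Fixpoint orbit_deriv (U : R -> R) (D : nat -> R -> R) (e : R) (fs : nat -> nat) (x : state)
    (k : nat) (d : state) : state :=
  match k with
  | O => d
  | S k' => step_deriv U D e (fs k') (fs k) (orbit U e fs x k') (orbit_deriv U D e fs x k' d)
  end.

Section Linearization.

Variables (N : nat) (U : R -> R) (D : nat -> R -> R) (e : R).
Hypothesis rise : is_rise_function U D.
Hypothesis convex : forall x, 0 <= x -> 0 < D 2%nat x.
Hypothesis e_pos : 0 < e.

(* Slopes lie in (0,1), so a step derivative at most doubles the sup norm. *)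
Lemma step_deriv_bound f f' A d B : lone_firing N U e A f -> (f' < N)%nat ->
  (forall i, (i < N)%nat -> Rabs (d i) <= B) ->
  forall i, (i < N)%nat -> Rabs (step_deriv U D e f f' A d i) <= 2 * B.
Proof.
  intros [hf [_ h]] hf' hB.
  assert (hev : forall i, (i < N)%nat -> Rabs (event_deriv U D e f A d i) <= B).
  { intros i hi. unfold event_deriv. specialize (hB i hi).
    assert (0 <= Rabs (d i)) by apply Rabs_pos.
    destruct (Nat.eqb_spec i f) as [_|hif]; [rewrite Rabs_R0; lra|].
    destruct (h i hi hif) as [[h0 _] _].
    destruct (pulse_slope_bounds U D rise convex e e_pos (A i) h0).
    rewrite Rabs_mult, Rabs_right by lra. nra. }
  intros i hi. unfold step_deriv.
  eapply Rle_trans; [apply Rabs_triang|]. rewrite Rabs_Ropp.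
  assert (hev1 := hev i hi). assert (hev2 := hev f' hf'). lra.
Qed.

Lemma step_first_order f f' A : lone_firing N U e A f -> (f' < N)%nat ->
  forall eps, 0 < eps -> exists delta, 0 < delta /\
  forall (y : state) B, (forall j, (j < N)%nat -> Rabs (y j - A j) <= B) -> B < delta ->
  forall i, (i < N)%nat ->
    Rabs (next_state U e f f' y i - next_state U e f f' A i
          - step_deriv U D e f f' A (fun j => y j - A j) i) <= eps * B.
Proof.
  intros [hf [_ h]] hf' eps heps.
  destruct (uniform_radius N (fun j delta => j <> f -> forall s, Rabs s < delta ->
      Rabs (pulse U e (A j + s) - pulse U e (A j) - pulse_slope U D e (A j) * s)
        <= eps / 2 * Rabs s)) as [delta [hdelta Hdelta]].
  { intros j d d' hd P hj s hs. apply P; auto. lra. }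
  { intros j hj. destruct (Nat.eq_dec j f) as [->|hjf]; [exists 1; split; [lra | tauto]|].
    destruct (h j hj hjf) as [[h0 _] _].
    destruct (pulse_first_order U D rise convex e e_pos (A j) h0 (eps / 2)) as [d [hd Hd]];
      [lra|].
    exists d. split; auto. }
  exists delta. split; auto. intros y B hB hBd.
  set (E := fun j => after_event U e f y j - after_event U e f A j
                     - event_deriv U D e f A (fun l => y l - A l) j).
  assert (hE : forall j, (j < N)%nat -> Rabs (E j) <= eps / 2 * B).
  { intros j hj. unfold E, after_event, event_deriv.
    assert (hBj := hB j hj). assert (0 <= Rabs (y j - A j)) by apply Rabs_pos.
    destruct (Nat.eqb_spec j f) as [|hjf].
    - replace (0 - 0 - 0) with 0 by ring. rewrite Rabs_R0. nra.
    - replace (y j) with (A j + (y j - A j)) at 1 by ring.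
      assert (Hj := Hdelta j hj hjf (y j - A j) ltac:(lra)).
      assert (eps / 2 * Rabs (y j - A j) <= eps / 2 * B) by (apply Rmult_le_compat_l; lra).
      lra. }
  intros i hi.
  replace (next_state U e f f' y i - next_state U e f f' A i
           - step_deriv U D e f f' A (fun j => y j - A j) i) with (E i - E f')
    by (unfold E, next_state, step_deriv; ring).
  eapply Rle_trans; [apply Rabs_triang|]. rewrite Rabs_Ropp.
  assert (hE1 := hE i hi). assert (hE2 := hE f' hf'). lra.
Qed.

(* Linearity of the step derivative turns an error B in the first-order
   approximation of the previous orbit point into an error 2 B. *)
Lemma step_deriv_chain f f' A P L B : lone_firing N U e A f -> (f' < N)%nat ->
  (forall j, (j < N)%nat -> Rabs (P j - A j - L j) <= B) ->
  forall i, (i < N)%nat ->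
    Rabs (next_state U e f f' P i - next_state U e f f' A i - step_deriv U D e f f' A L i)
    <= Rabs (next_state U e f f' P i - next_state U e f f' A i
             - step_deriv U D e f f' A (fun j => P j - A j) i) + 2 * B.
Proof.
  intros hA hf' hB i hi.
  assert (hlin := step_deriv_bound f f' A (fun j => P j - A j - L j) B hA hf' hB i hi).
  replace (next_state U e f f' P i - next_state U e f f' A i - step_deriv U D e f f' A L i)
    with ((next_state U e f f' P i - next_state U e f f' A i
           - step_deriv U D e f f' A (fun j => P j - A j) i)
          + step_deriv U D e f f' A (fun j => P j - A j - L j) i)
    by (unfold step_deriv, event_deriv; destruct (Nat.eqb i f); destruct (Nat.eqb f' f); ring).
  eapply Rle_trans; [apply Rabs_triang | lra].
Qed.

Section Orbit.

Variables (fs : nat -> nat) (x : state) (m : nat).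
Hypothesis lone : lone_orbit N U e fs x m.

Lemma orbit_deriv_bound k : (k <= m)%nat -> forall d B,
  (forall i, (i < N)%nat -> Rabs (d i) <= B) ->
  forall i, (i < N)%nat -> Rabs (orbit_deriv U D e fs x k d i) <= 2 ^ k * B.
Proof.
  induction k as [|k IH]; intros hk d B hB i hi; simpl; [rewrite Rmult_1_l; auto|].
  rewrite Rmult_assoc. apply (step_deriv_bound (fs k)); [apply lone; lia | apply lone; lia | | auto].
  intros j hj. apply IH; auto. lia.
Qed.

Lemma orbit_first_order k : (k <= m)%nat -> forall eps, 0 < eps -> exists delta, 0 < delta /\
  forall h : state, (forall i, (i < N)%nat -> Rabs (h i) < delta) ->
  forall i, (i < N)%nat ->
    Rabs (orbit U e fs (fun j => x j + h j) k i - orbit U e fs x k i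
          - orbit_deriv U D e fs x k h i) <= eps * norm1 N h.
Proof.
  induction k as [|k IH]; intros hk eps heps.
  { exists 1. split; [lra|]. intros h _ i hi. simpl.
    replace (x i + h i - x i - h i) with 0 by ring. rewrite Rabs_R0.
    assert (0 <= norm1 N h) by apply norm1_nonneg. nra. }
  set (A := orbit U e fs x k). set (K := 2 ^ k + 1).
  assert (hK : 1 <= K) by (unfold K; assert (0 < 2 ^ k) by (apply pow_lt; lra); lra).
  destruct (step_first_order (fs k) (fs (S k)) A (lone k ltac:(lia)) ltac:(apply lone; lia)
              (eps / (2 * K))) as [dstep [hdstep Hstep]]; [apply Rdiv_lt_0_compat; lra|].
  destruct (IH ltac:(lia) (Rmin 1 (eps / 4))) as [dprev [hdprev Hprev]];
    [apply Rmin_pos; lra|].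
  assert (hNp : 0 < INR N + 1) by (assert (0 <= INR N) by apply pos_INR; lra).
  exists (Rmin dprev (dstep / (K * (INR N + 1)))). split.
  { apply Rmin_pos; [auto | apply Rdiv_lt_0_compat; [auto | apply Rmult_lt_0_compat; lra]]. }
  intros h hh i hi.
  set (n1 := norm1 N h). assert (0 <= n1) by apply norm1_nonneg.
  assert (hsmall : K * n1 < dstep).
  { apply norm1_scaled; auto. intros j hj. eapply Rlt_le_trans; [apply hh; auto | apply Rmin_r]. }
  assert (hhprev : forall l, (l < N)%nat -> Rabs (h l) < dprev).
  { intros l hl. eapply Rlt_le_trans; [apply hh; auto | apply Rmin_l]. }
  set (P := orbit U e fs (fun j => x j + h j) k).
  set (L := orbit_deriv U D e fs x k h).
  assert (hPL : forall j, (j < N)%nat -> Rabs (P j - A j - L j) <= eps / 4 * n1).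
  { intros j hj. eapply Rle_trans; [apply Hprev; auto|].
    apply Rmult_le_compat_r; [auto | apply Rmin_r]. }
  assert (hL : forall j, (j < N)%nat -> Rabs (L j) <= 2 ^ k * n1).
  { intros j hj. apply orbit_deriv_bound; [lia | | auto]. intros l hl. apply norm1_ge; auto. }
  assert (hPA : forall j, (j < N)%nat -> Rabs (P j - A j) <= K * n1).
  { intros j hj. replace (P j - A j) with ((P j - A j - L j) + L j) by ring.
    eapply Rle_trans; [apply Rabs_triang|].
    assert (Rabs (P j - A j - L j) <= n1).
    { eapply Rle_trans; [apply Hprev; auto|]. fold n1.
      rewrite <- (Rmult_1_l n1) at 2. apply Rmult_le_compat_r; [auto | apply Rmin_l]. }
    assert (hLj := hL j hj). unfold K. lra. }
  assert (hrem := Hstep P (K * n1) hPA hsmall i hi).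
  simpl. fold A P L.
  eapply Rle_trans; [apply (step_deriv_chain _ _ A P L (eps / 4 * n1)); auto; apply lone; lia|].
  assert (eps / (2 * K) * (K * n1) = eps / 2 * n1) by (field; lra).
  lra.
Qed.

End Orbit.
End Linearization.

Lemma orbit_deriv_linear U D e fs x k a u v :
  orbit_deriv U D e fs x k (fun l => a * u l + v l)
  = fun i => a * orbit_deriv U D e fs x k u i + orbit_deriv U D e fs x k v i.
Proof.
  induction k as [|k IH]; simpl; auto. rewrite IH. apply functional_extensionality. intro i.
  unfold step_deriv, event_deriv.
  destruct (Nat.eqb i (fs k)); destruct (Nat.eqb (fs (S k)) (fs k)); ring.
Qed.

Lemma orbit_deriv_zero U D e fs x k : orbit_deriv U D e fs x k (fun _ => 0) = fun _ => 0.
Proof.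
  induction k as [|k IH]; simpl; auto. rewrite IH. apply functional_extensionality. intro i.
  unfold step_deriv, event_deriv.
  destruct (Nat.eqb i (fs k)); destruct (Nat.eqb (fs (S k)) (fs k)); ring.
Qed.

Lemma orbit_deriv_sum U D e fs x k n (c : nat -> R) (w : nat -> state) :
  orbit_deriv U D e fs x k (fun l => sumN n (fun j => c j * w j l))
  = fun i => sumN n (fun j => c j * orbit_deriv U D e fs x k (w j) i).
Proof.
  induction n as [|n IH]; simpl; [apply orbit_deriv_zero|].
  replace (fun l => sumN n (fun j => c j * w j l) + c n * w n l)
    with (fun l => c n * w n l + sumN n (fun j => c j * w j l))
    by (apply functional_extensionality; intro; ring).
  rewrite orbit_deriv_linear, IH. apply functional_extensionality; intro; ring.
Qed.

Lemma orbit_deriv_ext N U D e fs x m : (forall k, (k <= m)%nat -> (fs k < N)%nat) ->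
  forall k, (k <= m)%nat -> forall u v, (forall l, (l < N)%nat -> u l = v l) ->
  forall i, (i < N)%nat -> orbit_deriv U D e fs x k u i = orbit_deriv U D e fs x k v i.
Proof.
  intros hfs. induction k as [|k IH]; intros hk u v huv i hi; simpl; auto.
  assert (hf' := hfs (S k) hk).
  unfold step_deriv, event_deriv. rewrite (IH ltac:(lia) u v huv i hi), (IH ltac:(lia) u v huv _ hf').
  reflexivity.
Qed.

Definition unit_vector (j : nat) : state := fun l => if Nat.eqb l j then 1 else 0.

(* Perturbations are taken on the section x_r = 1, i.e. with h r = 0. *)
Definition drop_coord (r : nat) (v : state) : state := fun l => if Nat.eqb l r then 0 else v l.

Lemma drop_coord_id r v : v r = 0 -> drop_coord r v = v.
Proof.
  intros hv. apply functional_extensionality. intro l. unfold drop_coord.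
  destruct (Nat.eqb_spec l r) as [->|]; auto.
Qed.

Lemma unit_vector_expansion N (v : state) l : (l < N)%nat ->
  v l = sumN N (fun j => v j * unit_vector j l).
Proof.
  intros hl. rewrite (sumN_single N _ l hl); unfold unit_vector; [rewrite Nat.eqb_refl; ring|].
  intros j hj hjl. destruct (Nat.eqb_spec l j) as [->|]; [tauto | ring].
Qed.

Definition return_matrix U D e fs x m r : nat -> nat -> R :=
  fun i j => if Nat.eqb j r then 0 else orbit_deriv U D e fs x m (unit_vector j) i.

Lemma return_matrix_apply N U D e fs x m r : (forall k, (k <= m)%nat -> (fs k < N)%nat) ->
  forall v i, (i < N)%nat ->
  matvec N (return_matrix U D e fs x m r) v i = orbit_deriv U D e fs x m (drop_coord r v) i.
Proof.
  intros hfs v i hi. unfold matvec.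
  rewrite (orbit_deriv_ext N U D e fs x m hfs m (Nat.le_refl m) (drop_coord r v)
             (fun l => sumN N (fun j => drop_coord r v j * unit_vector j l)))
    by (auto || intros; apply unit_vector_expansion; auto).
  rewrite orbit_deriv_sum. apply sumN_ext. intros j hj. unfold return_matrix, drop_coord.
  destruct (Nat.eqb j r); ring.
Qed.

Definition spread_le (N : nat) (d : state) (w : R) : Prop :=
  exists a, forall i, (i < N)%nat -> a <= d i <= a + w.

Lemma spread_abs_bound N d w r : (r < N)%nat -> d r = 0 -> spread_le N d w ->
  forall i, (i < N)%nat -> Rabs (d i) <= w.
Proof.
  intros hr hd [a ha] i hi. destruct (ha r hr) as [b1 b2]. rewrite hd in b1, b2.
  destruct (ha i hi). apply Rabs_le. lra.
Qed.

Section Contraction.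

Variables (N : nat) (U : R -> R) (D : nat -> R -> R) (e : R).
Hypothesis rise : is_rise_function U D.
Hypothesis convex : forall x, 0 <= x -> 0 < D 2%nat x.
Hypothesis e_pos : 0 < e.

(* A linearized step vanishes on the firing unit and multiplies the other
   coordinates by slopes in (0, c]; since the firing coordinate of d is 0,
   this shrinks the spread of d by the factor c, and the subsequent uniform
   shift does not change the spread. *)
Lemma step_deriv_contracts f f' A d w c : lone_firing N U e A f -> (f' < N)%nat -> 0 <= c ->
  (forall i, (i < N)%nat -> i <> f -> pulse_slope U D e (A i) <= c) ->
  d f = 0 -> spread_le N d w -> spread_le N (step_deriv U D e f f' A d) (c * w).
Proof.
  intros [hf [_ h]] hf' hc0 hslope hd0 [a ha].
  destruct (ha f hf) as [a1 a2]. rewrite hd0 in a1, a2.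
  assert (hev : forall i, (i < N)%nat ->
            c * a <= event_deriv U D e f A d i <= c * a + c * w).
  { intros i hi. unfold event_deriv. destruct (Nat.eqb_spec i f) as [_|hif]; [nra|].
    destruct (h i hi hif) as [[h0 _] _].
    destruct (pulse_slope_bounds U D rise convex e e_pos (A i) h0).
    specialize (hslope i hi hif). destruct (ha i hi). nra. }
  exists (c * a - event_deriv U D e f A d f'). intros i hi. unfold step_deriv.
  destruct (hev i hi). lra.
Qed.

Lemma orbit_deriv_contracts fs x m c : lone_orbit N U e fs x m -> 0 <= c ->
  (forall k, (k < m)%nat -> forall i, (i < N)%nat -> i <> fs k ->
     pulse_slope U D e (orbit U e fs x k i) <= c) ->
  forall k, (k <= m)%nat -> forall d w, d (fs O) = 0 -> spread_le N d w ->
  orbit_deriv U D e fs x k d (fs k) = 0 /\ spread_le N (orbit_deriv U D e fs x k d) (c ^ k * w).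
Proof.
  intros hlone hc0 hslope. induction k as [|k IH]; intros hk d w hd hw; simpl.
  - split; auto. rewrite Rmult_1_l. auto.
  - destruct (IH ltac:(lia) d w hd hw) as [h1 h2]. split.
    + unfold step_deriv. ring.
    + rewrite Rmult_assoc. apply (step_deriv_contracts (fs k)); auto.
      * apply hlone. lia.
      * apply hlone. lia.
Qed.

End Contraction.

Lemma below_threshold_open U D e A : is_rise_function U D -> 0 < A < 1 -> U A + e < 1 ->
  exists delta, 0 < delta /\ forall t, Rabs (t - A) < delta -> 0 < t < 1 /\ U t + e < 1.
Proof.
  intros rise hA hUA.
  destruct (U_cont U D rise A (1 - e - U A) ltac:(lra)) as [alp [halp Halp]].
  assert (0 < Rmin A (1 - A)) by (apply Rmin_pos; lra).
  exists (Rmin alp (Rmin A (1 - A))). split; [apply Rmin_pos; auto|].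
  intros t ht.
  assert (h1 : Rabs (t - A) < alp) by (eapply Rlt_le_trans; [apply ht | apply Rmin_l]).
  assert (h2 : Rabs (t - A) < Rmin A (1 - A)) by (eapply Rlt_le_trans; [apply ht | apply Rmin_r]).
  assert (Rmin A (1 - A) <= A) by apply Rmin_l. assert (Rmin A (1 - A) <= 1 - A) by apply Rmin_r.
  apply Rabs_def2 in h2. split; [lra|].
  destruct (Req_dec t A) as [->|htA]; [lra|].
  assert (hU : Rabs (U t - U A) < 1 - e - U A).
  { apply (Halp t). split; [split; [exact I | auto] | exact h1]. }
  apply Rabs_def2 in hU. lra.
Qed.

Section Stability.

Variables (N : nat) (U : R -> R) (D : nat -> R -> R) (e : R) (Rf : R -> R).
Hypothesis rise : is_rise_function U D.
Hypothesis convex : forall x, 0 <= x -> 0 < D 2%nat x.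
Hypothesis e_pos : 0 < e.
Hypothesis reset : is_partial_reset Rf.

Variables (r : nat) (fs : nat -> nat) (x : state) (m : nat).
Hypothesis m_pos : (0 < m)%nat.
Hypothesis fs_start : fs O = r.
Hypothesis fs_end : fs m = r.
Hypothesis fs_between : forall k, (0 < k)%nat -> (k < m)%nat -> fs k <> r.
Hypothesis lone : lone_orbit N U e fs x m.
Hypothesis periodic : forall i, (i < N)%nat -> orbit U e fs x m i = x i.

Lemma fs_range k : (k <= m)%nat -> (fs k < N)%nat.
Proof. intros hk. apply lone, hk. Qed.

Lemma perturbed_orbit_close dist : 0 < dist -> exists delta, 0 < delta /\
  forall h : state, (forall i, (i < N)%nat -> Rabs (h i) < delta) ->
  forall k, (k <= m)%nat -> forall i, (i < N)%nat ->
    Rabs (orbit U e fs (fun j => x j + h j) k i - orbit U e fs x k i) < dist.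
Proof.
  intros hdist.
  destruct (uniform_radius (S m) (fun k delta => (k <= m)%nat -> forall h : state,
      (forall i, (i < N)%nat -> Rabs (h i) < delta) -> forall i, (i < N)%nat ->
      Rabs (orbit U e fs (fun j => x j + h j) k i - orbit U e fs x k i
            - orbit_deriv U D e fs x k h i) <= 1 * norm1 N h)) as [d1 [hd1 Hd1]].
  { intros k d d' hd P hk h hh. apply P; auto. intros i hi. specialize (hh i hi). lra. }
  { intros k hk.
    destruct (orbit_first_order N U D e rise convex e_pos fs x m lone k ltac:(lia) 1 ltac:(lra))
      as [d [hd Hd]].
    exists d. split; auto. }
  set (K := 2 ^ m + 1).
  assert (hK : 1 <= K) by (unfold K; assert (0 < 2 ^ m) by (apply pow_lt; lra); lra).
  assert (hNp : 0 < INR N + 1) by (assert (0 <= INR N) by apply pos_INR; lra).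
  exists (Rmin d1 (dist / (K * (INR N + 1)))). split.
  { apply Rmin_pos; [auto | apply Rdiv_lt_0_compat; [auto | apply Rmult_lt_0_compat; lra]]. }
  intros h hh k hk i hi.
  set (n1 := norm1 N h). assert (0 <= n1) by apply norm1_nonneg.
  assert (hsmall : K * n1 < dist).
  { apply norm1_scaled; auto. intros j hj. eapply Rlt_le_trans; [apply hh; auto | apply Rmin_r]. }
  assert (hrem := Hd1 k ltac:(lia) hk h
                    ltac:(intros l hl; eapply Rlt_le_trans; [apply hh; auto | apply Rmin_l]) i hi).
  assert (hlin := orbit_deriv_bound N U D e rise convex e_pos fs x m lone k hk h n1
                    ltac:(intros l hl; apply norm1_ge; auto) i hi).
  assert (2 ^ k <= 2 ^ m) by (apply Rle_pow; [lra | lia]).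
  assert (2 ^ k * n1 <= 2 ^ m * n1) by (apply Rmult_le_compat_r; auto).
  fold n1 in hrem.
  replace (orbit U e fs (fun j => x j + h j) k i - orbit U e fs x k i)
    with ((orbit U e fs (fun j => x j + h j) k i - orbit U e fs x k i
           - orbit_deriv U D e fs x k h i) + orbit_deriv U D e fs x k h i) by ring.
  eapply Rle_lt_trans; [apply Rabs_triang|]. unfold K in hsmall. lra.
Qed.

Lemma perturbed_lone_orbit : exists delta, 0 < delta /\
  forall h : state, h r = 0 -> (forall i, (i < N)%nat -> Rabs (h i) < delta) ->
  lone_orbit N U e fs (fun j => x j + h j) m.
Proof.
  assert (hpos := lone_orbit_pos N U D e rise convex e_pos fs x m m_pos lone periodic).
  destruct (uniform_radius (S m) (fun k delta => forall i, (i < N)%nat ->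
      i <> fs k -> forall t, Rabs (t - orbit U e fs x k i) < delta -> 0 < t < 1 /\ U t + e < 1))
    as [dist [hdist Hdist]].
  { intros k d d' hd P i hi hik t ht. apply (P i hi hik). lra. }
  { intros k hk. apply uniform_radius.
    - intros i d d' hd P hik t ht. apply P; auto. lra.
    - intros i hi. destruct (Nat.eq_dec i (fs k)) as [->|hik]; [exists 1; split; [lra | tauto]|].
      destruct (lone k ltac:(lia)) as [_ [_ hrest]]. destruct (hrest i hi hik) as [[_ h1] h2].
      destruct (below_threshold_open U D e (orbit U e fs x k i) rise) as [d [hd Hd]]; auto.
      { split; auto. apply hpos; auto. lia. }
      exists d. split; auto. }
  destruct (perturbed_orbit_close dist hdist) as [delta [hdelta Hclose]].
  exists delta. split; auto. intros h hr0 hh k hk.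
  split; [apply fs_range; auto|]. split.
  - destruct k as [|k]; [|apply next_state_fires].
    simpl. rewrite fs_start, hr0, Rplus_0_r.
    destruct (lone O ltac:(lia)) as [_ [hx _]]. rewrite fs_start in hx. exact hx.
  - intros i hi hik. destruct (Hdist k ltac:(lia) i hi hik _ (Hclose h hh k hk i hi)).
    split; [lra | auto].
Qed.

Lemma return_map_differentiable : forall eps, 0 < eps -> exists delta, 0 < delta /\
  forall h : state, h r = 0 -> (forall i, (i < N)%nat -> Rabs (h i) < delta) ->
  exists y, return_map N (homog e) U Rf r (fun i => x i + h i) y /\
    forall i, (i < N)%nat ->
      Rabs (y i - x i - matvec N (return_matrix U D e fs x m r) h i) <= eps * norm1 N h.
Proof.
  intros eps heps.
  destruct (orbit_first_order N U D e rise convex e_pos fs x m lone m (Nat.le_refl m) eps heps)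
    as [d1 [hd1 Hd1]].
  destruct perturbed_lone_orbit as [d2 [hd2 Hd2]].
  exists (Rmin d1 d2). split; [apply Rmin_pos; auto|]. intros h hr0 hh.
  assert (hh1 : forall i, (i < N)%nat -> Rabs (h i) < d1).
  { intros i hi. eapply Rlt_le_trans; [apply hh; auto | apply Rmin_l]. }
  assert (hh2 : forall i, (i < N)%nat -> Rabs (h i) < d2).
  { intros i hi. eapply Rlt_le_trans; [apply hh; auto | apply Rmin_r]. }
  destruct (lone_orbit_return N U D e Rf rise convex e_pos reset r _ m fs m_pos fs_start fs_end
              fs_between (Hd2 h hr0 hh2)) as [hpre hret].
  exists (orbit U e fs (fun j => x j + h j) m). split.
  - split; [auto|]. exists m, (orbit U e fs (fun j => x j + h j)).
    eexists. split; [exact hret | reflexivity].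
  - intros i hi. rewrite (return_matrix_apply N U D e fs x m r fs_range h i hi).
    rewrite drop_coord_id by auto. rewrite <- (periodic i hi). apply Hd1; auto.
Qed.

Lemma slopes_below_one : exists c, 0 <= c < 1 /\
  forall k, (k < m)%nat -> forall i, (i < N)%nat -> i <> fs k ->
    pulse_slope U D e (orbit U e fs x k i) <= c.
Proof.
  apply uniform_bound_below_one.
  { intros k c c' hcc P i hi hik. specialize (P i hi hik). lra. }
  intros k hk. destruct (uniform_bound_below_one N (fun i c => i <> fs k ->
      pulse_slope U D e (orbit U e fs x k i) <= c)) as [c [hc Hc]].
  - intros i c c' hcc P hik. specialize (P hik). lra.
  - intros i hi. destruct (Nat.eq_dec i (fs k)) as [->|hik]; [exists 0; split; [lra | tauto]|].
    destruct (lone k ltac:(lia)) as [_ [_ hrest]]. destruct (hrest i hi hik) as [[h0 _] _].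
    exists (pulse_slope U D e (orbit U e fs x k i)). split; [|intros; lra].
    apply (pulse_slope_bounds U D rise convex e e_pos); auto.
  - exists c. split; [lra | auto].
Qed.

Lemma return_matrix_spread c : 0 <= c < 1 ->
  (forall k, (k < m)%nat -> forall i, (i < N)%nat -> i <> fs k ->
     pulse_slope U D e (orbit U e fs x k i) <= c) ->
  forall v : state, v r = 0 -> forall n,
    Nat.iter n (matvec N (return_matrix U D e fs x m r)) v r = 0 /\
    spread_le N (Nat.iter n (matvec N (return_matrix U D e fs x m r)) v) (c ^ n * (2 * norm1 N v)).
Proof.
  intros hc Hc v hv0.
  set (M := return_matrix U D e fs x m r). set (w0 := 2 * norm1 N v).
  assert (hw0 : 0 <= w0) by (unfold w0; assert (0 <= norm1 N v) by apply norm1_nonneg; lra).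
  assert (hr : (r < N)%nat) by (rewrite <- fs_end; apply fs_range; auto).
  assert (hcm : c ^ m <= c).
  { destruct m as [|m']; [lia|]. simpl.
    assert (c ^ m' <= 1) by (rewrite <- (pow1 m'); apply pow_incr; lra). nra. }
  induction n as [|n [h1 [a ha]]].
  - split; auto. exists (- norm1 N v). intros l hl. rewrite Rmult_1_l. unfold w0.
    assert (hvl : Rabs (v l) <= norm1 N v) by (apply norm1_ge; auto).
    simpl. unfold Rabs in hvl. destruct (Rcase_abs (v l)); lra.
  - set (V := Nat.iter n (matvec N M) v) in *.
    assert (hstep : forall l, (l < N)%nat ->
                      Nat.iter (S n) (matvec N M) v l = orbit_deriv U D e fs x m V l).
    { intros l hl. simpl. fold V. unfold M.
      rewrite (return_matrix_apply N U D e fs x m r fs_range V l hl), drop_coord_id; auto. }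
    assert (0 <= c ^ n) by (apply pow_le; lra).
    destruct (orbit_deriv_contracts N U D e rise convex e_pos fs x m c lone ltac:(lra)
                Hc m (Nat.le_refl m) V (c ^ n * w0)) as [hfire [b hb]];
      [rewrite fs_start; auto | exists a; auto|].
    split; [rewrite hstep, <- fs_end; auto|].
    exists b. intros l hl. rewrite hstep by auto. destruct (hb l hl). split; auto.
    simpl. assert (c ^ m * (c ^ n * w0) <= c * (c ^ n * w0))
      by (apply Rmult_le_compat_r; [apply Rmult_le_pos|]; auto).
    lra.
Qed.

Lemma return_matrix_iterates_vanish : forall v : state, v r = 0 -> forall i, (i < N)%nat ->
  Un_cv (fun n => Nat.iter n (matvec N (return_matrix U D e fs x m r)) v i) 0.
Proof.
  intros v hv0 i hi eps heps.
  destruct slopes_below_one as [c [hc Hc]].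
  set (w0 := 2 * norm1 N v).
  assert (hw0 : 0 <= w0) by (unfold w0; assert (0 <= norm1 N v) by apply norm1_nonneg; lra).
  destruct (pow_lt_1_zero c ltac:(rewrite Rabs_right; lra) (eps / (w0 + 1))
              ltac:(apply Rdiv_lt_0_compat; lra)) as [n0 Hn0].
  exists n0. intros n hn. unfold Rdist. rewrite Rminus_0_r.
  destruct (return_matrix_spread c hc Hc v hv0 n) as [h1 h2].
  assert (hb := spread_abs_bound N _ _ r ltac:(rewrite <- fs_start; apply fs_range; lia) h1 h2 i hi).
  fold w0 in hb.
  specialize (Hn0 n hn). rewrite Rabs_right in Hn0 by (apply Rle_ge, pow_le; lra).
  assert (0 <= c ^ n) by (apply pow_le; lra).
  assert (c ^ n * w0 <= c ^ n * (w0 + 1)) by (apply Rmult_le_compat_l; lra).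
  assert (c ^ n * (w0 + 1) < eps / (w0 + 1) * (w0 + 1)) by (apply Rmult_lt_compat_r; lra).
  assert (eps / (w0 + 1) * (w0 + 1) = eps) by (field; lra).
  lra.
Qed.

End Stability.

Lemma splay_linearly_stable N U D e Rf r x : is_rise_function U D ->
  (forall x, 0 <= x -> 0 < D 2%nat x) -> 0 < e -> is_partial_reset Rf -> (r < N)%nat ->
  splay_state N (homog e) U Rf r x -> linearly_stable N (homog e) U Rf r x.
Proof.
  intros rise convex e_pos reset hr hsplay.
  destruct (splay_lone_orbit N U D e Rf rise convex reset r x hr hsplay)
    as [m [fs [hm [hf0 [hfm [hnr [hlone hper]]]]]]].
  exists (return_matrix U D e fs x m r). split.
  - apply (return_map_differentiable N U D e Rf rise convex e_pos reset r fs x m); auto.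
  - apply (return_matrix_iterates_vanish N U D e rise convex e_pos r fs x m); auto.
Qed.

(* The ladder c, H_e(c) + c, H_e(H_e(c) + c) + c, ...: read backwards, the
   phases of the splay state seen just before consecutive firings. *)
Fixpoint ladder (U : R -> R) (e c : R) (j : nat) : R :=
  match j with O => c | S j' => pulse U e (ladder U e c j') + c end.

Fixpoint firing_unit (N r k : nat) : nat :=
  match k with
  | O => r
  | S k' => if Nat.eqb (firing_unit N r k') (N - 1) then O else S (firing_unit N r k')
  end.

(* The position of unit i in the firing queue after k events (0 = firing). *)
Definition queue_rank (N r k i : nat) : nat :=
  if (firing_unit N r k <=? i)%nat then (i - firing_unit N r k)%nat
  else (i + N - firing_unit N r k)%nat.

Section FiringOrder.

Variables (N r : nat).
Hypothesis r_lt : (r < N)%nat.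

Lemma firing_unit_lt k : (firing_unit N r k < N)%nat.
Proof.
  induction k as [|k IH]; simpl; auto.
  destruct (Nat.eqb_spec (firing_unit N r k) (N - 1)); lia.
Qed.

Lemma firing_unit_closed k : (k <= N)%nat ->
  firing_unit N r k = if (r + k <? N)%nat then (r + k)%nat else (r + k - N)%nat.
Proof.
  induction k as [|k IH]; intros hk; simpl.
  - destruct (Nat.ltb_spec (r + 0) N); lia.
  - rewrite IH by lia.
    destruct (Nat.ltb_spec (r + k) N); destruct (Nat.ltb_spec (r + S k) N);
    destruct (Nat.eqb_spec (r + k) (N - 1)); destruct (Nat.eqb_spec (r + k - N) (N - 1)); lia.
Qed.

Lemma firing_unit_period : firing_unit N r N = r.
Proof. rewrite firing_unit_closed by lia. destruct (Nat.ltb_spec (r + N) N); lia. Qed.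

Lemma firing_unit_not_r k : (0 < k)%nat -> (k < N)%nat -> firing_unit N r k <> r.
Proof. intros h1 h2. rewrite firing_unit_closed by lia. destruct (Nat.ltb_spec (r + k) N); lia. Qed.

Lemma queue_rank_lt k i : (i < N)%nat -> (queue_rank N r k i < N)%nat.
Proof.
  intros hi. unfold queue_rank. assert (h := firing_unit_lt k).
  destruct (Nat.leb_spec (firing_unit N r k) i); lia.
Qed.

Lemma queue_rank_zero k i : (i < N)%nat -> (queue_rank N r k i = 0%nat <-> i = firing_unit N r k).
Proof.
  intros hi. unfold queue_rank. assert (h := firing_unit_lt k).
  destruct (Nat.leb_spec (firing_unit N r k) i); lia.
Qed.

Lemma queue_rank_step k i : (i < N)%nat ->
  queue_rank N r (S k) i
  = if Nat.eqb (queue_rank N r k i) 0 then (N - 1)%nat else (queue_rank N r k i - 1)%nat.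
Proof.
  intros hi. unfold queue_rank. assert (h := firing_unit_lt k).
  change (firing_unit N r (S k)) with
    (if Nat.eqb (firing_unit N r k) (N - 1) then O else S (firing_unit N r k)).
  generalize dependent (firing_unit N r k). intros f hf.
  repeat match goal with
  | |- context [Nat.leb ?a ?b] => destruct (Nat.leb_spec a b)
  | |- context [Nat.eqb ?a ?b] => destruct (Nat.eqb_spec a b)
  end; lia.
Qed.

Lemma queue_rank_next k : (2 <= N)%nat -> queue_rank N r k (firing_unit N r (S k)) = 1%nat.
Proof.
  intros hN. unfold queue_rank. assert (h := firing_unit_lt k). simpl.
  destruct (Nat.eqb_spec (firing_unit N r k) (N - 1)).
  - destruct (Nat.leb_spec (firing_unit N r k) 0); lia.
  - destruct (Nat.leb_spec (firing_unit N r k) (S (firing_unit N r k))); lia.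
Qed.

End FiringOrder.

Section Existence.

Variables (N : nat) (U : R -> R) (D : nat -> R -> R) (e : R) (Rf : R -> R).
Hypothesis rise : is_rise_function U D.
Hypothesis convex : forall x, 0 <= x -> 0 < D 2%nat x.
Hypothesis e_pos : 0 < e.
Hypothesis reset : is_partial_reset Rf.

Lemma ladder_ge c : 0 <= c -> forall j, c <= ladder U e c j.
Proof.
  intros hc. induction j as [|j IH]; simpl; [lra|].
  assert (0 <= pulse U e (ladder U e c j)) by (apply (pulse_spec U D rise convex e e_pos); lra).
  lra.
Qed.

Lemma ladder_incr c : 0 <= c -> forall j j', (j < j')%nat -> ladder U e c j < ladder U e c j'.
Proof.
  intros hc j j' hjj'.
  assert (hstep : forall j, ladder U e c j < ladder U e c (S j)).
  { intros j0. simpl. assert (c <= ladder U e c j0) by (apply ladder_ge; auto).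
    assert (ladder U e c j0 < pulse U e (ladder U e c j0))
      by (apply (pulse_gt U D rise convex e e_pos); lra). lra. }
  induction hjj' as [|j' _ IH]; [apply hstep | eapply Rlt_trans; [apply IH | apply hstep]].
Qed.

Lemma ladder_cont j c : 0 <= c -> continuity_pt (fun c => ladder U e c j) c.
Proof.
  intros hc. induction j as [|j IH]; simpl.
  - apply derivable_continuous_pt, derivable_pt_id.
  - apply continuity_pt_plus; [|apply derivable_continuous_pt, derivable_pt_id].
    apply (continuity_pt_comp (fun c => ladder U e c j) (pulse U e)); auto.
    apply (pulse_cont U D rise convex e e_pos). assert (c <= ladder U e c j) by (apply ladder_ge; auto).
    lra.
Qed.

Lemma ladder_no_gap j : U (ladder U e 0 j) = INR j * e.
Proof.
  induction j as [|j IH]; simpl ladder; [rewrite (U_zero U D rise); simpl; ring|].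
  assert (0 <= ladder U e 0 j) by (apply ladder_ge; lra).
  rewrite Rplus_0_r, (proj2 (pulse_spec U D rise convex e e_pos _ H)), IH, S_INR. ring.
Qed.

Lemma splay_gap_exists : INR (N - 1) * e < 1 ->
  exists c, 0 < c <= 1 /\ ladder U e c (N - 1) = 1.
Proof.
  intros heN.
  assert (g0 : ladder U e 0 (N - 1) < 1).
  { apply (U_lt_inv U D rise); [apply ladder_ge; lra | lra|].
    rewrite ladder_no_gap, (U_one U D rise). auto. }
  assert (g1 : 1 <= ladder U e 1 (N - 1)) by (apply ladder_ge; lra).
  destruct (Req_dec (ladder U e 1 (N - 1)) 1) as [|hne]; [exists 1; split; [lra | auto]|].
  destruct (IVT_interv (fun c => ladder U e c (N - 1) - 1) 0 1) as [c [hc hc1]].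
  - intros a ha. apply continuity_pt_minus; [apply ladder_cont; lra|].
    apply continuity_pt_const. intros ? ?; auto.
  - lra.
  - lra.
  - lra.
  - exists c. split; [|lra]. split; [|lra].
    destruct (Req_dec c 0) as [->|]; lra.
Qed.

Variables (r : nat) (c : R).
Hypothesis r_lt : (r < N)%nat.
Hypothesis gap : 0 < c <= 1.
Hypothesis ladder_top : ladder U e c (N - 1) = 1.

Definition splay_phase (s : nat) : R := ladder U e c (N - 1 - s).

Lemma splay_phase_first : splay_phase O = 1.
Proof. unfold splay_phase. rewrite Nat.sub_0_r. exact ladder_top. Qed.

Lemma splay_phase_last : splay_phase (N - 1) = c.
Proof. unfold splay_phase. replace (N - 1 - (N - 1))%nat with O by lia. reflexivity. Qed.

Lemma splay_phase_below s : (1 <= s)%nat -> (s < N)%nat ->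
  0 < splay_phase s < 1 /\ U (splay_phase s) + e < 1.
Proof.
  intros h1 h2. unfold splay_phase. set (j := (N - 1 - s)%nat).
  assert (b1 : c <= ladder U e c j) by (apply ladder_ge; lra).
  assert (b2 : ladder U e c j < 1) by (rewrite <- ladder_top; apply ladder_incr; [lra | unfold j; lia]).
  assert (b3 : ladder U e c (S j) <= 1).
  { rewrite <- ladder_top. destruct (Nat.eq_dec (S j) (N - 1)) as [->|]; [lra|].
    left. apply ladder_incr; [lra | unfold j; lia]. }
  simpl in b3.
  destruct (pulse_spec U D rise convex e e_pos (ladder U e c j) ltac:(lra)) as [h3 h4].
  split; [lra|]. rewrite <- h4, <- (U_one U D rise). apply (U_incr U D rise); auto. lra.
Qed.

(* One pulse followed by the flow moves each unit one queue position up. *)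
Lemma splay_phase_step s : (1 <= s)%nat -> (s < N)%nat ->
  pulse U e (splay_phase s) + c = splay_phase (s - 1).
Proof.
  intros h1 h2. unfold splay_phase. replace (N - 1 - (s - 1))%nat with (S (N - 1 - s)) by lia.
  reflexivity.
Qed.

Definition splay_initial : state := fun i => splay_phase (queue_rank N r O i).

Lemma splay_orbit k i : (i < N)%nat ->
  orbit U e (firing_unit N r) splay_initial k i = splay_phase (queue_rank N r k i).
Proof.
  revert i. induction k as [|k IH]; intros i hi; [reflexivity|].
  set (fs := firing_unit N r).
  assert (hflow : after_event U e (fs k) (orbit U e fs splay_initial k) (fs (S k)) = 1 - c).
  { assert (hfk := firing_unit_lt N r r_lt k). assert (hfk' := firing_unit_lt N r r_lt (S k)).
    destruct (Nat.eq_dec N 1) as [HN|HN].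
    - assert (fs (S k) = fs k) as -> by (unfold fs; lia).
      unfold after_event. rewrite Nat.eqb_refl.
      pose proof ladder_top as htop. replace (N - 1)%nat with O in htop by lia.
      simpl in htop. lra.
    - assert (hn : queue_rank N r k (fs (S k)) = 1%nat) by (apply queue_rank_next; lia).
      assert (hne : fs (S k) <> fs k).
      { intro heq. rewrite heq in hn.
        assert (queue_rank N r k (fs k) = 0%nat) by (apply queue_rank_zero; auto). unfold fs in *. lia. }
      unfold after_event. destruct (Nat.eqb_spec (fs (S k)) (fs k)) as [|_]; [tauto|].
      rewrite IH by auto. rewrite hn.
      assert (hs := splay_phase_step 1%nat ltac:(lia) ltac:(lia)). simpl in hs.
      rewrite splay_phase_first in hs. lra. }
  simpl. fold fs. unfold next_state. rewrite hflow, (queue_rank_step N r r_lt k i hi).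
  assert (hrk := queue_rank_lt N r r_lt k i hi).
  unfold after_event. destruct (Nat.eqb_spec i (fs k)) as [hik|hik].
  - assert (queue_rank N r k i = 0%nat) as -> by (apply queue_rank_zero; auto).
    simpl. rewrite splay_phase_last. ring.
  - assert (queue_rank N r k i <> 0%nat) by (rewrite queue_rank_zero; auto).
    destruct (Nat.eqb_spec (queue_rank N r k i) 0) as [|_]; [tauto|].
    rewrite IH, <- (splay_phase_step (queue_rank N r k i)) by (auto || lia). ring.
Qed.

Lemma splay_lone k : lone_firing N U e (orbit U e (firing_unit N r) splay_initial k) (firing_unit N r k).
Proof.
  assert (hfk := firing_unit_lt N r r_lt k).
  split; [auto|]. split.
  - rewrite splay_orbit by auto.
    replace (queue_rank N r k (firing_unit N r k)) with O by (symmetry; apply queue_rank_zero; auto).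
    apply splay_phase_first.
  - intros i hi hik. rewrite splay_orbit by auto.
    assert (queue_rank N r k i <> 0%nat) by (rewrite queue_rank_zero; auto).
    assert (hrk := queue_rank_lt N r r_lt k i hi).
    destruct (splay_phase_below (queue_rank N r k i)) as [b1 b2]; [lia | auto | split; [lra | auto]].
Qed.

Lemma splay_initial_is_splay : splay_state N (homog e) U Rf r splay_initial.
Proof.
  set (fs := firing_unit N r).
  assert (hlone : lone_orbit N U e fs splay_initial N) by (intros k _; apply splay_lone).
  destruct (lone_orbit_return N U D e Rf rise convex e_pos reset r splay_initial N fs)
    as [hpre hret]; auto.
  - lia.
  - apply firing_unit_period; auto.
  - intros k; apply firing_unit_not_r; auto.
  - split; [auto|]. exists N, (orbit U e fs splay_initial). eexists. split; [exact hret|]. split.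
    + intros i hi. rewrite splay_orbit by auto. unfold splay_initial, queue_rank.
      rewrite (firing_unit_period N r r_lt). reflexivity.
    + intros k hk. exists (fs k). split; [apply firing_unit_lt; auto|].
      intros i hi. apply (lone_firing_avalanche N e U D rise _ _ (hlone k ltac:(lia)) i hi).
Qed.

End Existence.

Theorem mainTheorem4 (N : nat) (e : R) (U : R -> R) (D : nat -> R -> R) (Rf : R -> R)
  (hN : (1 <= N)%nat) (he : 0 < e) (heN : INR (N - 1) * e < 1)
  (hU : is_rise_function U D) (hconv : forall x, 0 <= x -> 0 < D 2%nat x)
  (hR : is_partial_reset Rf) (hRn : is_neuronal Rf) :
  forall r : nat, (r < N)%nat ->
    (exists x : state, splay_state N (homog e) U Rf r x) /\
    (forall x : state, splay_state N (homog e) U Rf r x ->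
       linearly_stable N (homog e) U Rf r x).
Proof.
  intros r hr. split.
  - destruct (splay_gap_exists N U D e hU hconv he heN) as [c [hc hladder]].
    exists (splay_initial N U e r c).
    apply (splay_initial_is_splay N U D e Rf hU hconv he hR r c hr hc hladder).
  - intros x hx. apply (splay_linearly_stable N U D e Rf r x hU hconv he hR hr hx).
Qed.
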